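(* Let $h:\mathbb{R}^n\to(-\infty,+\infty]$ be a proper lower semicontinuous convex function whose domain $\mathrm{dom}\,h$ is closed and bounded, let $\Omega\subseteq\mathbb{R}^n$ be a closed convex set with $\mathrm{dom}\,h\subseteq\Omega$, and let $D_h := \sup_{u_1,u_2\in\mathrm{dom}\,h}\|u_1-u_2\|$. Let $A_0=12$, $a_{k-1} = \frac{1+\sqrt{1+4A_{k-1}}}{2}$ and $A_k = A_{k-1}+a_{k-1}$ for $k\ge1$. Let $\lambda_0>0$ and $\bar\xi\ge 0$. Let $\{y_k\}_{k\ge0}\subseteq \mathrm{dom}\,h$, let $\{\lambda_k\}_{k\ge1}$ satisfy $0<\lambda_k\le\lambda_0$, let $\{\xi_k\}_{k\ge1}$ satisfy $0\le\xi_k\le\bar\xi$, and set $\tau_k = 2\xi_k\lambda_k/a_{k-1}$ for $k\ge1$. Let $x_0 = y_0$ and, for $k\ge1$, $$x_k = P_\Omega\!\left(\frac{(1+\tau_k)A_k}{a_{k-1}(\tau_k a_{k-1}+1)}\,y_k - \frac{A_{k-1}}{a_{k-1}(\tau_k a_{k-1}+1)}\,y_{k-1}\right),$$ where $P_\Omega$ denotes the Euclidean projection onto $\Omega$. Then for every $k\ge 0$, $$\|x_k - x_0\| \le C k, \qquad C := 2(2+\bar\xi\lambda_0)D_h.$$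
   Context: $\|\cdot\|$ is the Euclidean norm on $\mathbb{R}^n$. $\mathrm{dom}\,h=\{u: h(u)<+\infty\}$. *)

From HB Require Import structures.
From mathcomp Require Import all_boot all_order all_algebra.
From mathcomp Require Import all_classical all_reals all_analysis.
Set Implicit Arguments. Unset Strict Implicit. Unset Printing Implicit Defensive.
Import Order.TTheory GRing.Theory Num.Theory.
Import numFieldNormedType.Exports.
Local Open Scope classical_set_scope.
Local Open Scope ring_scope.

(* Vectors of R^n are row vectors 'rV[R]_n; the topology is the standard
   (product) topology of mathcomp-analysis, which agrees with the Euclidean one. *)

Definition enorm {R : realType} {n : nat} (v : 'rV[R]_n) : R :=
  Num.sqrt (\sum_(i < n) v ord0 i ^+ 2).

Definition dom {R : realType} {n : nat} (h : 'rV[R]_n -> \bar R) : set 'rV[R]_n :=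
  [set u | (h u < +oo)%E].

Definition proper_fun {R : realType} {n : nat} (h : 'rV[R]_n -> \bar R) : Prop :=
  (forall u, h u != -oo%E) /\ (exists u, h u < +oo)%E.

Definition lsc_fun {R : realType} {n : nat} (h : 'rV[R]_n -> \bar R) : Prop :=
  forall a : R, closed [set u | (h u <= a%:E)%E].

Definition convex_efun {R : realType} {n : nat} (h : 'rV[R]_n -> \bar R) : Prop :=
  forall (u v : 'rV[R]_n) (t : R), 0 <= t <= 1 ->
    dom h u -> dom h v ->
    (h (t *: u + (1 - t) *: v)%R <= t%:E * h u + (1 - t)%:E * h v)%E.

Definition bounded_eset {R : realType} {n : nat} (S : set 'rV[R]_n) : Prop :=
  exists M : R, forall u, S u -> enorm u <= M.

Definition is_proj {R : realType} {n : nat} (Omega : set 'rV[R]_n)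
  (P : 'rV[R]_n -> 'rV[R]_n) : Prop :=
  forall u, Omega (P u) /\ forall w, Omega w -> enorm (u - P u) <= enorm (u - w).

Definition diam {R : realType} {n : nat} (S : set 'rV[R]_n) : R :=
  sup [set enorm (u1 - u2) | u1 in S & u2 in S].

Fixpoint Aseq {R : realType} (k : nat) : R :=
  match k with
  | 0%N => 12
  | k'.+1 => Aseq k' + (1 + Num.sqrt (1 + 4 * Aseq k')) / 2
  end.

Definition aseq {R : realType} (k : nat) : R :=
  (1 + Num.sqrt (1 + 4 * @Aseq R k)) / 2.

From HB Require Import structures.
From mathcomp Require Import all_boot all_order all_algebra.
From mathcomp Require Import all_classical all_reals all_analysis.
From mathcomp Require Import ring lra.
Import Order.TTheory GRing.Theory Num.Theory.
Import numFieldNormedType.Exports.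
Local Open Scope classical_set_scope.
Local Open Scope ring_scope.

(* For k >= 1 write a := a_{k-1}, t := tau_k and
   b := A_{k-1} / (a (t a + 1)).  Since a^2 = a + A_{k-1}, the first
   coefficient in the definition of x_k equals 1 + b, so x_k = P_Omega(z)
   with the extrapolated point z = (1 + b) y_k - b y_{k-1}; moreover
   0 <= b <= a - 1.  The projection onto a closed convex set does not
   increase the distance to points of the set, and y_0 lies in
   dom h ⊆ Omega, hence
     ||x_k - x_0|| <= ||z - y_0|| <= ||y_k - y_0|| + b ||y_k - y_{k-1}||
                   <= (1 + b) D_h <= a_{k-1} D_h <= 4 k D_h <= C k,
   using the growth bound a_{k-1} <= 4 k of the step sizes. *)

Section Euclidean.
Context {R : realType} {n : nat}.
Implicit Types u v w : 'rV[R]_n.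

Definition dot u v : R := \sum_(i < n) u ord0 i * v ord0 i.
Definition nsq u : R := dot u u.

Lemma enormE u : enorm u = Num.sqrt (nsq u).
Proof. by congr Num.sqrt; apply: eq_bigr => i _; rewrite expr2. Qed.

Lemma dotC u v : dot u v = dot v u.
Proof. by apply: eq_bigr => i _; rewrite mulrC. Qed.

Lemma dotDl u v w : dot (u + v) w = dot u w + dot v w.
Proof. by rewrite /dot -big_split; apply: eq_bigr => i _; rewrite mxE mulrDl. Qed.

Lemma dotZl (c : R) u w : dot (c *: u) w = c * dot u w.
Proof. by rewrite /dot mulr_sumr; apply: eq_bigr => i _; rewrite mxE mulrA. Qed.

Lemma dotNl u w : dot (- u) w = - dot u w.
Proof. by rewrite -scaleN1r dotZl mulN1r. Qed.

Lemma dotDr u v w : dot w (u + v) = dot w u + dot w v.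
Proof. by rewrite dotC dotDl !(dotC w). Qed.

Lemma dotZr (c : R) u w : dot w (c *: u) = c * dot w u.
Proof. by rewrite dotC dotZl dotC. Qed.

Lemma dotNr u w : dot w (- u) = - dot w u.
Proof. by rewrite dotC dotNl dotC. Qed.

Lemma nsq_ge0 u : 0 <= nsq u.
Proof. by apply: sumr_ge0 => i _; rewrite -expr2 sqr_ge0. Qed.

Lemma enorm_ge0 u : 0 <= enorm u.
Proof. exact: sqrtr_ge0. Qed.

Lemma enorm_sq u : enorm u ^+ 2 = nsq u.
Proof. by rewrite enormE sqr_sqrtr // nsq_ge0. Qed.

Lemma enorm_le u v : (enorm u <= enorm v) = (nsq u <= nsq v).
Proof. by rewrite !enormE ler_sqrt // nsq_ge0. Qed.

Lemma nsqD u v : nsq (u + v) = nsq u + 2 * dot u v + nsq v.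
Proof. by rewrite /nsq !(dotDl, dotDr) (dotC v u); ring. Qed.

Lemma nsqBZ u v (t : R) :
  nsq (u - t *: v) = nsq u - 2 * t * dot u v + t ^+ 2 * nsq v.
Proof. by rewrite nsqD /nsq !(dotNl, dotNr, dotZl, dotZr); ring. Qed.

Lemma nonneg_quadratic_discr (a b c : R) : 0 <= a -> 0 <= c ->
  (forall t, 0 <= a - 2 * t * b + t ^+ 2 * c) -> b ^+ 2 <= a * c.
Proof.
move=> a0 c0 nonneg.
have [c_eq0|c_neq0] := eqVneq c 0.
  move: nonneg; rewrite c_eq0 => nonneg.
  have [->|b_neq0] := eqVneq b 0; first by rewrite expr0n mulr0.
  have := nonneg ((a + 1) / (2 * b)).
  have -> : 2 * ((a + 1) / (2 * b)) * b = a + 1 by field; rewrite b_neq0; lra.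
  lra.
have c_gt0 : 0 < c by rewrite lt_neqAle eq_sym c_neq0.
have := nonneg (b / c).
have -> : a - 2 * (b / c) * b + (b / c) ^+ 2 * c = (a * c - b ^+ 2) / c by field.
by rewrite pmulr_lge0 ?invr_gt0 // subr_ge0.
Qed.

(* Cauchy-Schwarz, from the nonnegativity of t |-> nsq (u - t v). *)
Lemma cauchy_schwarz u v : dot u v <= enorm u * enorm v.
Proof.
have discr : dot u v ^+ 2 <= nsq u * nsq v.
  apply: nonneg_quadratic_discr; rewrite ?nsq_ge0 // => t.
  by rewrite -nsqBZ nsq_ge0.
rewrite -(ger0_norm (mulr_ge0 (enorm_ge0 u) (enorm_ge0 v))).
apply: le_trans (ler_norm _) _.
by rewrite -ler_sqr ?normr_ge0 // !real_normK ?num_real // exprMn !enorm_sq.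
Qed.

Lemma enorm_triangle u v : enorm (u + v) <= enorm u + enorm v.
Proof.
have sum_ge0 := addr_ge0 (enorm_ge0 u) (enorm_ge0 v).
rewrite [X in X <= _]enormE -(ger0_norm sum_ge0) -sqrtr_sqr ler_sqrt ?sqr_ge0 //.
have := cauchy_schwarz u v; have := enorm_sq u; have := enorm_sq v.
rewrite nsqD; nra.
Qed.

Lemma enormZ (c : R) u : enorm (c *: u) = `|c| * enorm u.
Proof.
by rewrite !enormE /nsq dotZl dotZr mulrA -expr2 sqrtrM ?sqr_ge0 // sqrtr_sqr.
Qed.

Lemma enormN u : enorm (- u) = enorm u.
Proof. by rewrite -scaleN1r enormZ normrN normr1 mul1r. Qed.

Lemma enorm0 : enorm (0 : 'rV[R]_n) = 0.
Proof. by rewrite -(scale0r 0) enormZ normr0 mul0r. Qed.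

End Euclidean.

Section Projection.
Context {R : realType} {n : nat}.
Context {Omega : set 'rV[R]_n} {P : 'rV[R]_n -> 'rV[R]_n}.
Hypotheses (Omega_convex : convex_set Omega) (P_proj : is_proj Omega P).

(* Otherwise a small move from P z
   towards w along the segment [P z, w] ⊆ Omega would get closer to z. *)
Lemma proj_variational z w : Omega w -> dot (z - P z) (w - P z) <= 0.
Proof.
move=> Omega_w.
set p := P z; set c := dot (z - p) (w - p); set N := nsq (w - p).
have [Pz_in p_min] := P_proj z.
rewrite leNgt; apply/negP => c_gt0.
have N_ge0 : 0 <= N by exact: nsq_ge0.
suff [t [t_gt0 t_le1 tN]] : exists t : R, [/\ 0 < t, t <= 1 & t * N < 2 * c].
  have Omega_t : Omega (t *: w + (1 - t) *: p).
    by have := Omega_convex w p (Itv01 (ltW t_gt0) t_le1); rewrite !inE; apply.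
  have := p_min _ Omega_t.
  have -> : z - (t *: w + (1 - t) *: p) = (z - p) - t *: (w - p).
    by apply/rowP => i; rewrite !mxE; ring.
  rewrite enorm_le nsqBZ -/c -/N; nra.
have [N_le_c|c_lt_N] := leP N c; first by exists 1; split => //; lra.
exists (c / N); split.
- by rewrite divr_gt0 //; lra.
- by rewrite ler_pdivrMr; lra.
- by rewrite divfK; [lra | rewrite gt_eqF //; lra].
Qed.

Lemma proj_dist_le z w : Omega w -> enorm (P z - w) <= enorm (z - w).
Proof.
move=> Omega_w.
have obtuse := proj_variational z w Omega_w.
rewrite -enormN opprB enorm_le.
have -> : z - w = (z - P z) - 1 *: (w - P z) by rewrite scale1r opprB addrA subrK.
rewrite nsqBZ expr1n mul1r; have := nsq_ge0 (z - P z); lra.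
Qed.

End Projection.

Section Diameter.
Context {R : realType} {n : nat}.
Context {S : set 'rV[R]_n}.
Hypothesis S_bounded : bounded_eset S.

Lemma diam_ub u1 u2 : S u1 -> S u2 -> enorm (u1 - u2) <= diam S.
Proof.
have [M M_bound] := S_bounded; move=> S_u1 S_u2.
apply: sup_upper_bound; last by exists u1 => //; exists u2.
split; first by exists (enorm (u1 - u2)); exists u1 => //; exists u2.
exists (M + M) => _ [a S_a [b S_b <-]].
apply: le_trans (enorm_triangle _ _) _.
by rewrite enormN lerD // M_bound.
Qed.

Lemma extrapolation_dist (b : R) u v w : 0 <= b -> S u -> S v -> S w ->
  enorm ((1 + b) *: u - b *: v - w) <= (1 + b) * diam S.
Proof.
move=> b_ge0 S_u S_v S_w.
have -> : (1 + b) *: u - b *: v - w = (u - w) + b *: (u - v).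
  by apply/rowP => i; rewrite !mxE; ring.
apply: le_trans (enorm_triangle _ _) _.
rewrite enormZ ger0_norm // mulrDl mul1r.
by rewrite lerD ?diam_ub // ler_wpM2l ?diam_ub.
Qed.

End Diameter.

Section StepSizes.
Context {R : realType}.

Lemma Aseq_ge0 k : 0 <= @Aseq R k.
Proof. by elim: k => [|k IH] //=; rewrite addr_ge0 ?divr_ge0 ?addr_ge0. Qed.

Lemma aseq_sq k : @aseq R k ^+ 2 = aseq k + Aseq k.
Proof.
have := sqr_sqrtr (a := 1 + 4 * @Aseq R k) ltac:(have := Aseq_ge0 k; lra).
rewrite /aseq; set s := Num.sqrt _ => s_sq.
have -> : ((1 + s) / 2) ^+ 2 = (1 + 2 * s + s ^+ 2) / 4 by field.
by rewrite s_sq; field.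
Qed.

(* a_k >= 1, as the positive root of X^2 - X - A_k with A_k >= 0. *)
Lemma aseq_ge1 k : 1 <= @aseq R k.
Proof.
have := aseq_sq k; have := sqrtr_ge0 (1 + 4 * @Aseq R k); have := Aseq_ge0 k.
rewrite /aseq; nra.
Qed.

Lemma AseqS k : @Aseq R k.+1 = Aseq k + aseq k.
Proof. by []. Qed.

(* Quadratic growth of A_k, proved by induction from a_k^2 = a_k + A_k. *)
Lemma Aseq_le k : @Aseq R k <= (k%:R + 4) ^+ 2.
Proof.
elim: k => [|k IH] /=; first lra.
rewrite -/(aseq k) -natr1.
have := aseq_sq k; have := aseq_ge1 k; have : 0 <= k%:R :> R by [].
nra.
Qed.

Lemma aseq_le k : @aseq R k <= 4 * k.+1%:R.
Proof.
have := aseq_sq k; have := aseq_ge1 k; have := Aseq_le k.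
case: k => [|k] /=; first by rewrite mulr1; nra.
rewrite -[k.+2%:R]natr1 -[k.+1%:R]natr1; have : 0 <= k%:R :> R by [].
nra.
Qed.

End StepSizes.

Section Extrapolation.
Context {R : realFieldType}.
Context {a t A : R}.
Hypotheses (a_ge1 : 1 <= a) (t_ge0 : 0 <= t) (a_sq : a ^+ 2 = a + A).

Let a_gt0 : 0 < a. Proof. exact: lt_le_trans ltr01 a_ge1. Qed.

Let ta1_gt0 : 0 < t * a + 1.
Proof. by have := mulr_ge0 t_ge0 (ltW a_gt0); lra. Qed.

(* With b := A / (a (t a + 1)), the weight of y_k in the update rule is
   1 + b: the update is the extrapolation (1 + b) y_k - b y_{k-1}. *)
Lemma extrapolation_weight :
  (1 + t) * (A + a) / (a * (t * a + 1)) = 1 + A / (a * (t * a + 1)).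
Proof.
have -> : A = a ^+ 2 - a by rewrite a_sq; ring.
by field; rewrite !gt_eqF.
Qed.

Lemma extrapolation_weight_bounds :
  0 <= A / (a * (t * a + 1)) /\ 1 + A / (a * (t * a + 1)) <= a.
Proof.
have -> : A / (a * (t * a + 1)) = (a - 1) / (t * a + 1).
  have -> : A = a ^+ 2 - a by rewrite a_sq; ring.
  by field; rewrite !gt_eqF.
have a1_ge0 : 0 <= a - 1 by rewrite subr_ge0.
split; first by rewrite divr_ge0 // ltW.
suff : (a - 1) / (t * a + 1) <= a - 1 by lra.
rewrite ler_pdivrMr //.
have : 0 <= (a - 1) * (t * a) by rewrite !mulr_ge0 // ltW.
lra.
Qed.

End Extrapolation.

Theorem lemma4p4 (R : realType) (n : nat)
  (h : 'rV[R]_n -> \bar R) (Omega : set 'rV[R]_n) (P : 'rV[R]_n -> 'rV[R]_n)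
  (lambda0 xibar : R) (y x : nat -> 'rV[R]_n) (lambda xi : nat -> R) :
  proper_fun h -> lsc_fun h -> convex_efun h ->
  closed (dom h) -> bounded_eset (dom h) ->
  closed Omega -> convex_set Omega -> dom h `<=` Omega ->
  is_proj Omega P ->
  0 < lambda0 -> 0 <= xibar ->
  (forall k, dom h (y k)) ->
  (forall k, (1 <= k)%N -> 0 < lambda k <= lambda0) ->
  (forall k, (1 <= k)%N -> 0 <= xi k <= xibar) ->
  x 0%N = y 0%N ->
  (forall k, (1 <= k)%N ->
     let tau := 2 * xi k * lambda k / aseq k.-1 in
     x k = P (((1 + tau) * Aseq k / (aseq k.-1 * (tau * aseq k.-1 + 1))) *: y k
              - (Aseq k.-1 / (aseq k.-1 * (tau * aseq k.-1 + 1))) *: y k.-1)) ->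
  forall k : nat,
    enorm (x k - x 0%N) <= 2 * (2 + xibar * lambda0) * diam (dom h) * k%:R.
Proof.
move=> _ _ _ _ bounded _ Omega_convex dom_sub P_proj lambda0_gt0 xibar_ge0
  y_dom lambda_bd xi_bd x0 x_step [|k].
  by rewrite x0 subrr enorm0 mulr0.
set D := diam (dom h).
have D_ge0 : 0 <= D.
  exact: le_trans (enorm_ge0 _) (diam_ub bounded _ _ (y_dom 0%N) (y_dom 0%N)).
have /andP[lambda_gt0 _] := lambda_bd k.+1 isT.
have /andP[xi_ge0 _] := xi_bd k.+1 isT.
have a_ge1 := aseq_ge1 (R := R) k.
set t := 2 * xi k.+1 * lambda k.+1 / aseq k.
have t_ge0 : 0 <= t by rewrite divr_ge0 ?mulr_ge0 //; lra.
set b := Aseq k / (aseq k * (t * aseq k + 1)).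
have [b_ge0 b_le] := extrapolation_weight_bounds a_ge1 t_ge0 (aseq_sq k).
rewrite (x_step k.+1 isT) -[k.+1.-1]/k -/t AseqS
  (extrapolation_weight a_ge1 t_ge0 (aseq_sq k)) -/b x0.
apply: le_trans (proj_dist_le Omega_convex P_proj _ _ (dom_sub _ (y_dom 0%N))) _.
apply: le_trans (extrapolation_dist bounded _ _ _ _ b_ge0 (y_dom _) (y_dom _) (y_dom _)) _.
have weight_le : 1 + b <= 4 * k.+1%:R.
  exact: le_trans b_le (aseq_le k).
apply: le_trans (ler_wpM2r D_ge0 weight_le) _.
have -> : 2 * (2 + xibar * lambda0) * D * k.+1%:R
          = 4 * k.+1%:R * D + 2 * (xibar * lambda0 * D * k.+1%:R) by ring.
by rewrite lerDl !mulr_ge0 // ltW.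
Qed.
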